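(* Let $\phi\in\Phi$, $\nu>0$, $p\in[1,\infty]$, $\mathcal{J}=\{J_1,\dots,J_m\}$ a partition of $\{1,\dots,n\}$, $f:\mathbb{R}^n\to(-\infty,+\infty]$ proper lsc, $\Omega\subseteq\mathbb{R}^n$ closed, and suppose $\min_{x\in\Omega}\{\nu f(x)+\|G_{\mathcal{J},p}(x)\|_0\}$ has a nonempty global optimal solution set with optimal value $\varpi^*$. Suppose $f$ is Lipschitz relative to $\Omega$ with constant $L_f>0$ (w.r.t. the Euclidean norm) and that $x^\varrho\in\Omega$ for every $x\in\Omega$ and $\varrho>0$. Let $\beta=\max\big(1,\max_{1\le i\le m}|J_i|^{\frac{p-2}{2p}}\big)$ (exponent $1/2$ when $p=\infty$) and $\bar\varrho=\frac{\phi'_-(1)(1-t^* )\beta\nu L_f}{1-t_0}$. Then: (i) for all $x\in\Omega$, $w\in[0,e]$: $\nu f(x)+\sum_{i=1}^m\phi(w_i)+\bar\varrho\langle e-w,G_{\mathcal{J},p}(x)\rangle\ge\varpi^*$, and $\varpi^*$ is the optimal value of the MPEC $$\textstyle (Q)\ \min_{x,w}\{\nu f(x)+\sum_{i=1}^m\phi(w_i):\ \langle e-w,G_{\mathcal{J},p}(x)\rangle=0,\ 0\le w\le e,\ x\in\Omega\};$$ (ii) for every $\varrho>\bar\varrho$, the set of global optimal solutions of $\min_{x,w}\{\nu f(x)+\sum_{i=1}^m\phi(w_i)+\varrho\langle e-w,G_{\mathcal{J},p}(x)\rangle:\ x\in\Omega,\ 0\le w\le e\}$ coincides with that of $(Q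)$.
   Context: $\Phi$ is the family of proper lsc functions $\phi:\mathbb{R}\to(-\infty,+\infty]$ with $\mathrm{int}(\mathrm{dom}\,\phi)\supseteq[0,1]$, convex on $[0,1]$, such that $\min_{t\in[0,1]}\phi(t)=0$ is attained at a (fixed) point $t^*\in[0,1)$, and $\phi(1)=1$; $\phi'_-(1)$ is the left derivative at $1$. $\psi(t)=\phi(t)$ on $[0,1]$, $+\infty$ otherwise; $t_0\in[0,1)$ is a point with $\frac{1}{1-t^*}\in\partial\psi(t_0)$ (convex subdifferential; such a point exists by Lemma A.1). $G_{\mathcal{J},p}(x):=(\|x_{J_1}\|_p,\dots,\|x_{J_m}\|_p)^T$; $\|v\|_0$ counts nonzero entries; $e$ is the all-ones vector. For $x\in\mathbb{R}^n$ and $\varrho>0$, $x^\varrho\in\mathbb{R}^n$ is obtained from $x$ by setting $x_j=0$ for all $j\in J_i$ with $\varrho\|x_{J_i}\|_p\le\phi'_-(1)$, and keeping all other entries. *)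

From Stdlib Require Import Reals Lra List.
Import ListNotations.
Open Scope R_scope.

(** Extended reals (-oo excluded): [None] stands for +oo. *)
Definition ER := option R.

Definition eadd (a b : ER) : ER :=
  match a, b with Some x, Some y => Some (x + y) | _, _ => None end.
Definition escal (c : R) (a : ER) : ER := option_map (Rmult c) a.
Definition egt (a : ER) (c : R) : Prop :=
  match a with None => True | Some x => c < x end.
Definition ege (a : ER) (c : R) : Prop :=
  match a with None => True | Some x => c <= x end.
Definition ele (a b : ER) : Prop :=
  match a, b with
  | Some x, Some y => x <= y
  | _, None => True
  | None, Some _ => False
  end.
(** real part (value on the effective domain; arbitrary 0 at +oo) *)
Definition rpart (a : ER) : R := match a with Some x => x | None => 0 end.

Definition rsum (k : nat) (F : nat -> R) : R :=
  fold_right (fun i acc => F i + acc) 0 (seq 0 k).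
Definition esum (k : nat) (F : nat -> ER) : ER :=
  fold_right (fun i acc => eadd (F i) acc) (Some 0) (seq 0 k).

(** R^n, represented as functions nat -> R vanishing from index n on
    (coordinates 1..n of the paper are indices 0..n-1). *)
Definition vec (n : nat) := {x : nat -> R | forall j, (n <= j)%nat -> x j = 0}.
Definition vv {n} (x : vec n) : nat -> R := proj1_sig x.
Coercion vv : vec >-> Funclass.

Definition enorm {n} (x y : vec n) : R :=
  sqrt (rsum n (fun j => (x j - y j) ^ 2)).

Inductive pexp := PFin (p : R) | PInf.
Definition valid_p (p : pexp) : Prop :=
  match p with PFin r => 1 <= r | PInf => True end.

Definition rpow (a b : R) : R :=
  if Rle_dec a 0 then 0 else Rpower a b.

(** Partition J = {J_1,..,J_m} of {1..n} given by a group map: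
    index j < n belongs to block J_(grp j + 1); every block nonempty. *)
Definition is_partition (n m : nat) (grp : nat -> nat) : Prop :=
  (forall j, (j < n)%nat -> (grp j < m)%nat) /\
  (forall i, (i < m)%nat -> exists j, (j < n)%nat /\ grp j = i).

Definition in_group (grp : nat -> nat) (i j : nat) : bool := Nat.eqb (grp j) i.

Definition gnorm (p : pexp) (n : nat) (grp : nat -> nat) (x : nat -> R) (i : nat) : R :=
  match p with
  | PFin r =>
      rpow (rsum n (fun j => if in_group grp i j then rpow (Rabs (x j)) r else 0)) (1 / r)
  | PInf =>
      fold_right (fun j acc => if in_group grp i j then Rmax (Rabs (x j)) acc else acc)
                 0 (seq 0 n)
  end.

Definition card_group (n : nat) (grp : nat -> nat) (i : nat) : nat :=
  length (filter (in_group grp i) (seq 0 n)).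

Definition G0 (p : pexp) (n m : nat) (grp : nat -> nat) (x : nat -> R) : R :=
  INR (length (filter (fun i => if Req_EM_T (gnorm p n grp x i) 0 then false else true)
                      (seq 0 m))).

Definition inner_ew (p : pexp) (n m : nat) (grp : nat -> nat) (x : nat -> R) (w : nat -> R) : R :=
  rsum m (fun i => (1 - w i) * gnorm p n grp x i).

Definition beta_exp (p : pexp) : R :=
  match p with PFin r => (r - 2) / (2 * r) | PInf => 1 / 2 end.
Definition beta (p : pexp) (n m : nat) (grp : nat -> nat) : R :=
  fold_right (fun i acc => Rmax (Rpower (INR (card_group n grp i)) (beta_exp p)) acc)
             1 (seq 0 m).

Definition lsc_R (h : R -> ER) : Prop :=
  forall t c, egt (h t) c ->
    exists delta, 0 < delta /\ forall s, Rabs (s - t) < delta -> egt (h s) c.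

Definition in_Phi (phi : R -> ER) (tstar : R) : Prop :=
  (exists t, phi t <> None) /\
  lsc_R phi /\
  (forall t, 0 <= t <= 1 -> exists delta, 0 < delta /\
      forall s, Rabs (s - t) < delta -> phi s <> None) /\
  (forall a b l, 0 <= a <= 1 -> 0 <= b <= 1 -> 0 <= l <= 1 ->
      rpart (phi (l * a + (1 - l) * b))
        <= l * rpart (phi a) + (1 - l) * rpart (phi b)) /\
  0 <= tstar < 1 /\ phi tstar = Some 0 /\
  (forall t, 0 <= t <= 1 -> ege (phi t) 0) /\
  phi 1 = Some 1.

Definition left_deriv_at1 (phi : R -> ER) (d : R) : Prop :=
  forall eps, 0 < eps -> exists delta, 0 < delta /\
    forall t, 1 - delta < t < 1 ->
      Rabs ((rpart (phi 1) - rpart (phi t)) / (1 - t) - d) < eps.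

Definition psi (phi : R -> ER) (t : R) : ER :=
  if Rle_dec 0 t then (if Rle_dec t 1 then phi t else None) else None.

Definition in_subdiff (h : R -> ER) (t0 g : R) : Prop :=
  h t0 <> None /\
  forall t, ege (h t) (rpart (h t0) + g * (t - t0)).

Definition proper_f {n} (f : vec n -> ER) : Prop := exists x, f x <> None.
Definition lsc_f {n} (f : vec n -> ER) : Prop :=
  forall x c, egt (f x) c ->
    exists delta, 0 < delta /\ forall y, enorm y x < delta -> egt (f y) c.
Definition closed_vset {n} (Om : vec n -> Prop) : Prop :=
  forall x, ~ Om x -> exists delta, 0 < delta /\ forall y, enorm y x < delta -> ~ Om y.
Definition lipschitz_rel {n} (f : vec n -> ER) (Om : vec n -> Prop) (L : R) : Prop :=
  forall x y, Om x -> Om y -> exists fx fy, f x = Some fx /\ f y = Some fy /\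
    Rabs (fx - fy) <= L * enorm x y.

Definition xrho_fun (p : pexp) (n : nat) (grp : nat -> nat) (d rho : R) (x : nat -> R) (j : nat) : R :=
  if Rle_dec (rho * gnorm p n grp x (grp j)) d then 0 else x j.

Lemma xrho_vec (p : pexp) (n : nat) (grp : nat -> nat) (d rho : R) (x : vec n) :
  forall j, (n <= j)%nat -> xrho_fun p n grp d rho x j = 0.
Proof.
  intros j Hj. unfold xrho_fun. destruct (Rle_dec _ _); [reflexivity|].
  destruct x as [x Hx]. simpl. apply Hx; exact Hj.
Qed.

Definition xrho (p : pexp) (n : nat) (grp : nat -> nat) (d rho : R) (x : vec n) : vec n :=
  exist _ (xrho_fun p n grp d rho x) (xrho_vec p n grp d rho x).

Definition obj0 {n} (p : pexp) (m : nat) (grp : nat -> nat) (nu : R) (f : vec n -> ER) (x : vec n) : ER :=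
  eadd (escal nu (f x)) (Some (G0 p n m grp x)).
Definition objQ {n} (m : nat) (phi : R -> ER) (nu : R) (f : vec n -> ER) (x : vec n) (w : nat -> R) : ER :=
  eadd (escal nu (f x)) (esum m (fun i => phi (w i))).
Definition objPen {n} (p : pexp) (m : nat) (grp : nat -> nat) (phi : R -> ER) (nu : R)
    (f : vec n -> ER) (rho : R) (x : vec n) (w : nat -> R) : ER :=
  eadd (objQ m phi nu f x w) (Some (rho * inner_ew p n m grp x w)).

Definition box (m : nat) (w : nat -> R) : Prop := forall i, (i < m)%nat -> 0 <= w i <= 1.

Definition optval_attained {A} (F : A -> Prop) (obj : A -> ER) (v : R) : Prop :=
  (exists z, F z /\ obj z = Some v) /\ (forall z, F z -> ege (obj z) v).
Definition optval {A} (F : A -> Prop) (obj : A -> ER) (v : R) : Prop :=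
  (forall z, F z -> ege (obj z) v) /\
  (forall eps, 0 < eps -> exists z r, F z /\ obj z = Some r /\ r < v + eps).
Definition gopt {A} (F : A -> Prop) (obj : A -> ER) (z : A) : Prop :=
  F z /\ forall z', F z' -> ele (obj z) (obj z').

(* For feasible [(x, w)], compare [x] with [x^rbar], which zeroes exactly the blocks with
   [rbar ||x_{J_i}||_p <= phi'_-(1)].  Optimality of [varpi] and the Lipschitz bound give
   [varpi <= nu f(x) + nu L_f ||x^rbar - x|| + ||G(x^rbar)||_0]; on a block of size [k] the
   Euclidean norm is at most [max(1, k^((p-2)/(2p))) ||.||_p], so the distance is at most
   [beta] times the sum of the zeroed block norms.  Each block's contribution is dominated by
   [phi(w_i) + rbar (1 - w_i) ||x_{J_i}||_p], using the two affine minorants of [phi] on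
   [[0,1]]: the tangent [1 - phi'_-(1) (1 - t)] at [1] and the line of slope [1 / (1 - tstar)]
   through [t0].  The penalty [<e - w, G(x)>] is nonnegative and (Q) attains
   [varpi] (with [w_i = tstar] on the zero blocks of an optimal [x] and [1] elsewhere), so the
   penalty is exact for every [rho > rbar], which is (ii). *)

From Stdlib Require Import Reals Lra List Lia.
Import ListNotations.
Open Scope R_scope.

Definition lsum {A} (l : list A) (F : A -> R) : R :=
  fold_right (fun i acc => F i + acc) 0 l.

Section ListSums.
Context {A : Type}.
Implicit Types (l : list A) (F G : A -> R).

Lemma lsum_app l1 l2 F : lsum (l1 ++ l2) F = lsum l1 F + lsum l2 F.
Proof. induction l1; simpl; [lra|]. rewrite IHl1. lra. Qed.

Lemma lsum_le l F G : (forall j, In j l -> F j <= G j) -> lsum l F <= lsum l G.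
Proof.
  induction l as [|a l IH]; simpl; intros H; [lra|].
  assert (F a <= G a) by auto.
  assert (lsum l F <= lsum l G) by auto.
  lra.
Qed.

Lemma lsum_ext l F G : (forall j, In j l -> F j = G j) -> lsum l F = lsum l G.
Proof.
  intros H. apply Rle_antisym; apply lsum_le; intros j Hj; rewrite H by exact Hj; lra.
Qed.

Lemma lsum_plus l F G : lsum l (fun j => F j + G j) = lsum l F + lsum l G.
Proof. induction l; simpl; [lra|]. rewrite IHl. lra. Qed.

Lemma lsum_scal l c F : lsum l (fun j => c * F j) = c * lsum l F.
Proof. induction l; simpl; [lra|]. rewrite IHl. lra. Qed.

Lemma lsum_const l c : lsum l (fun _ => c) = c * INR (length l).
Proof. induction l; simpl length; [simpl; lra|]. rewrite S_INR. simpl. rewrite IHl. lra. Qed.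

Lemma lsum_zero l F : (forall j, In j l -> F j = 0) -> lsum l F = 0.
Proof. intros H. rewrite (lsum_ext l F (fun _ => 0)), lsum_const by exact H. lra. Qed.

Lemma lsum_nonneg l F : (forall j, In j l -> 0 <= F j) -> 0 <= lsum l F.
Proof. intros H. rewrite <- (lsum_zero l (fun _ => 0)) by auto. apply lsum_le, H. Qed.

Lemma le_lsum_term l F j : (forall j, In j l -> 0 <= F j) -> In j l -> F j <= lsum l F.
Proof.
  induction l as [|a l IH]; simpl; intros H Hj; [contradiction|].
  destruct Hj as [<-|Hj].
  - assert (0 <= lsum l F) by (apply lsum_nonneg; auto). lra.
  - assert (0 <= F a) by auto. assert (F j <= lsum l F) by auto. lra.
Qed.

Lemma lsum_filter l (P : A -> bool) F :
  lsum l (fun j => if P j then F j else 0) = lsum (filter P l) F.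
Proof. induction l; simpl; [lra|]. destruct (P a); simpl; rewrite IHl; lra. Qed.

Lemma INR_length_filter l (P : A -> bool) :
  INR (length (filter P l)) = lsum l (fun j => if P j then 1 else 0).
Proof. rewrite lsum_filter, lsum_const. lra. Qed.

Lemma sqrt_lsum_le l F : (forall j, In j l -> 0 <= F j) ->
  sqrt (lsum l F) <= lsum l (fun j => sqrt (F j)).
Proof.
  induction l as [|a l IH]; simpl; intros H.
  - rewrite sqrt_0. lra.
  - assert (Ha : 0 <= F a) by auto.
    assert (HS : 0 <= lsum l F) by (apply lsum_nonneg; auto).
    assert (sqrt (lsum l F) <= lsum l (fun j => sqrt (F j))) by auto.
    apply Rle_trans with (sqrt (F a) + sqrt (lsum l F)); [|lra].
    rewrite <- (sqrt_pow2 (sqrt (F a) + sqrt (lsum l F))) by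
      (pose proof (sqrt_pos (F a)); pose proof (sqrt_pos (lsum l F)); lra).
    apply sqrt_le_1_alt.
    rewrite <- (pow2_sqrt (F a)) at 1 by exact Ha.
    rewrite <- (pow2_sqrt (lsum l F)) at 1 by exact HS.
    pose proof (sqrt_pos (F a)). pose proof (sqrt_pos (lsum l F)). nra.
Qed.

End ListSums.

Lemma lsum_indicator k m c : (k < m)%nat ->
  lsum (seq 0 m) (fun i => if Nat.eqb k i then c else 0) = c.
Proof.
  intros Hk. replace m with (k + S (m - S k))%nat by lia.
  rewrite seq_app, lsum_app. simpl. rewrite Nat.eqb_refl.
  rewrite !lsum_zero; [lra| |]; intros i Hi; apply in_seq in Hi;
    replace (Nat.eqb k i) with false by (symmetry; apply Nat.eqb_neq; lia); reflexivity.
Qed.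

Lemma lsum_partition (grp : nat -> nat) m (l : list nat) F :
  (forall j, In j l -> (grp j < m)%nat) ->
  lsum l F = lsum (seq 0 m) (fun i => lsum (filter (in_group grp i) l) F).
Proof.
  induction l as [|a l IH]; simpl; intros H.
  - rewrite lsum_zero; auto.
  - rewrite IH by auto. rewrite <- (lsum_indicator (grp a) m (F a)) at 1 by auto.
    rewrite <- lsum_plus. apply lsum_ext. intros i _. unfold in_group.
    destruct (Nat.eqb (grp a) i); simpl; lra.
Qed.

Definition lmax (c : R) (l : list nat) (a : nat -> R) : R :=
  fold_right (fun j acc => Rmax (a j) acc) c l.

Lemma lmax_ge_init c l a : c <= lmax c l a.
Proof. induction l; simpl; [lra|]. eapply Rle_trans; [apply IHl|apply Rmax_r]. Qed.

Lemma lmax_ge c l a j : In j l -> a j <= lmax c l a.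
Proof.
  induction l; simpl; [tauto|]. intros [<-|H]; [apply Rmax_l|].
  eapply Rle_trans; [apply IHl; auto|apply Rmax_r].
Qed.

Lemma lmax_lub c l a b : c <= b -> (forall j, In j l -> a j <= b) -> lmax c l a <= b.
Proof. induction l; simpl; intros Hc H; [lra|]. apply Rmax_lub; auto. Qed.

Lemma lmax_filter c l (P : nat -> bool) a :
  fold_right (fun j acc => if P j then Rmax (a j) acc else acc) c l = lmax c (filter P l) a.
Proof. induction l; simpl; auto. destruct (P a0); simpl; rewrite IHl; auto. Qed.

Lemma rpow_nonneg a b : 0 <= rpow a b.
Proof. unfold rpow. destruct (Rle_dec a 0); [lra|]. left; apply exp_pos. Qed.

Lemma rpow_Rpower a b : 0 < a -> rpow a b = Rpower a b.
Proof. intros H. unfold rpow. destruct (Rle_dec a 0); [lra|auto]. Qed.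

Lemma rpow_nonpos a b : a <= 0 -> rpow a b = 0.
Proof. intros H. unfold rpow. destruct (Rle_dec a 0); [auto|lra]. Qed.

Lemma rpow_scale M y s : 0 < M -> rpow (M * y) s = Rpower M s * rpow y s.
Proof.
  intros HM. destruct (Rle_dec y 0) as [Hy|Hy].
  - rewrite !rpow_nonpos by nra. ring.
  - rewrite !rpow_Rpower by nra. symmetry. apply Rpower_mult_distr; lra.
Qed.

Lemma exp_tangent x y : exp x * (1 + (y - x)) <= exp y.
Proof.
  replace (exp y) with (exp x * exp (y - x)) by (rewrite <- exp_plus; f_equal; ring).
  apply Rmult_le_compat_l; [left; apply exp_pos|apply exp_ineq1_le].
Qed.

Lemma INR_length_pos {A} (l : list A) : l <> [] -> 0 < INR (length l).
Proof. intros Hl. destruct l; [congruence|]. simpl length. apply lt_0_INR. lia. Qed.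

(* Convexity of [exp]: average its tangents at [s * ln y], evaluated at [ln y] and [0]. *)
Lemma rpow_le_tangent y s : 0 <= y -> 0 < s <= 1 -> rpow y s <= s * y + 1 - s.
Proof.
  intros Hy Hs. destruct (Req_dec y 0) as [->|Hy0].
  - rewrite rpow_nonpos by lra. lra.
  - rewrite rpow_Rpower by lra. unfold Rpower.
    pose proof (exp_tangent (s * ln y) (ln y)) as H1.
    pose proof (exp_tangent (s * ln y) 0) as H0.
    rewrite exp_ln in H1 by lra. rewrite exp_0 in H0.
    nra.
Qed.

(* Tangent-line bound of [y ^ s] at the mean [lsum l y / length l]. *)
Lemma lsum_rpow_le (l : list nat) y s : l <> [] -> 0 < s <= 1 -> (forall j, 0 <= y j) ->
  lsum l (fun j => rpow (y j) s) <= Rpower (INR (length l)) (1 - s) * rpow (lsum l y) s.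
Proof.
  intros Hl Hs Hy.
  pose proof (INR_length_pos l Hl) as Hk.
  set (k := INR (length l)) in *. set (T := lsum l y).
  destruct (Rle_dec T 0) as [HT|HT].
  - rewrite lsum_zero.
    + apply Rmult_le_pos; [left; apply exp_pos|apply rpow_nonneg].
    + intros j Hj. assert (y j <= T) by (apply (le_lsum_term l y); auto).
      apply rpow_nonpos. lra.
  - set (M := T / k).
    assert (HM : 0 < M) by (apply Rdiv_lt_0_compat; lra).
    apply Rle_trans with (lsum l (fun j => Rpower M s * (s * (y j / M) + 1 - s))).
    + apply lsum_le. intros j _.
      replace (y j) with (M * (y j / M)) at 1 by (field; lra).
      rewrite rpow_scale by exact HM.
      apply Rmult_le_compat_l; [left; apply exp_pos|].
      apply rpow_le_tangent; [apply Rmult_le_pos; [auto|left; apply Rinv_0_lt_compat; lra]|auto].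
    + rewrite lsum_scal.
      rewrite (lsum_ext l _ (fun j => s / M * y j + (1 - s))) by (intros; unfold Rdiv; ring).
      rewrite lsum_plus, lsum_scal, lsum_const. fold T k.
      replace T with (k * M) at 2 by (unfold M; field; lra).
      rewrite rpow_scale, <- Rmult_assoc, <- Rpower_plus by exact Hk.
      replace (1 - s + s) with 1 by ring. rewrite Rpower_1 by exact Hk.
      rewrite rpow_Rpower by exact HM.
      replace (s / M * T + (1 - s) * k) with k by (unfold M; field; lra). right; ring.
Qed.

Definition lp_norm (p : pexp) (l : list nat) (a : nat -> R) : R :=
  match p with
  | PFin r => rpow (lsum l (fun j => rpow (Rabs (a j)) r)) (1 / r)
  | PInf => lmax 0 l (fun j => Rabs (a j))
  end.

Lemma lp_norm_nonneg p l a : 0 <= lp_norm p l a.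
Proof. destruct p; simpl; [apply rpow_nonneg|apply lmax_ge_init]. Qed.

Lemma lp_norm_zero p l a : (forall j, In j l -> a j = 0) -> lp_norm p l a = 0.
Proof.
  intros H. destruct p as [r|]; simpl.
  - apply rpow_nonpos. rewrite lsum_zero; [lra|].
    intros j Hj. rewrite H, Rabs_R0 by exact Hj. apply rpow_nonpos. lra.
  - apply Rle_antisym; [|apply lmax_ge_init].
    apply lmax_lub; [lra|]. intros j Hj. rewrite H, Rabs_R0 by exact Hj. lra.
Qed.

Lemma Rabs_le_lp_norm p l a j : valid_p p -> In j l -> Rabs (a j) <= lp_norm p l a.
Proof.
  intros Hp Hj. destruct p as [r|]; simpl in Hp |- *.
  - set (T := lsum l (fun j => rpow (Rabs (a j)) r)).
    destruct (Req_dec (a j) 0) as [E|E]; [rewrite E, Rabs_R0; apply rpow_nonneg|].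
    pose proof (Rabs_pos_lt _ E) as Ha.
    assert (HaT : Rpower (Rabs (a j)) r <= T).
    { rewrite <- rpow_Rpower by exact Ha.
      apply (le_lsum_term l (fun j => rpow (Rabs (a j)) r)); auto.
      intros; apply rpow_nonneg. }
    pose proof (exp_pos (r * ln (Rabs (a j)))).
    rewrite rpow_Rpower by (unfold Rpower in HaT; lra).
    assert (Hinv : Rpower (Rpower (Rabs (a j)) r) (1 / r) = Rabs (a j)).
    { rewrite Rpower_mult. replace (r * (1 / r)) with 1 by (field; lra). apply Rpower_1, Ha. }
    rewrite <- Hinv at 1. apply Rle_Rpower_l; [left; apply Rdiv_lt_0_compat; lra|].
    split; [apply exp_pos|exact HaT].
  - apply (lmax_ge 0 l (fun j => Rabs (a j))), Hj.
Qed.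

Lemma sqrt_le_of_sq x y : 0 <= y -> x <= y ^ 2 -> sqrt x <= y.
Proof. intros Hy H. rewrite <- (sqrt_pow2 y) by exact Hy. apply sqrt_le_1_alt, H. Qed.

Lemma Rpower_2 a : 0 < a -> Rpower a 2 = a ^ 2.
Proof. intros H. rewrite <- Rpower_pow by auto. f_equal. Qed.

Lemma lsum_sq_eq0_of_lp_norm_eq0 p l a :
  valid_p p -> lp_norm p l a = 0 -> lsum l (fun j => a j ^ 2) = 0.
Proof.
  intros Hp H0. apply lsum_zero. intros j Hj.
  pose proof (Rabs_le_lp_norm p l a j Hp Hj). pose proof (Rabs_pos (a j)).
  rewrite <- pow2_abs. replace (Rabs (a j)) with 0 by lra. ring.
Qed.

Lemma lp_norm_Rpower r l a : 1 <= r -> 0 < lp_norm (PFin r) l a ->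
  Rpower (lp_norm (PFin r) l a) r = lsum l (fun j => rpow (Rabs (a j)) r).
Proof.
  simpl. set (T := lsum l _). intros Hr Hg.
  destruct (Rle_dec T 0) as [HT|HT]; [rewrite rpow_nonpos in Hg; lra|].
  rewrite rpow_Rpower, Rpower_mult by lra.
  replace (1 / r * r) with 1 by (field; lra). apply Rpower_1. lra.
Qed.

Lemma l2_le_lp_norm_le2 r l a : 1 <= r <= 2 ->
  sqrt (lsum l (fun j => a j ^ 2)) <= lp_norm (PFin r) l a.
Proof.
  intros Hr. set (g := lp_norm (PFin r) l a).
  destruct (Req_dec g 0) as [Hg0|Hg0].
  { rewrite (lsum_sq_eq0_of_lp_norm_eq0 (PFin r) l a), sqrt_0 by (simpl; lra || exact Hg0).
    apply lp_norm_nonneg. }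
  assert (Hg : 0 < g) by (assert (0 <= g) by apply lp_norm_nonneg; lra).
  apply sqrt_le_of_sq; [lra|].
  (* [|a j| <= g] gives [a j ^ 2 <= |a j| ^ r * g ^ (2 - r)]. *)
  apply Rle_trans with (lsum l (fun j => Rpower g (2 - r) * rpow (Rabs (a j)) r)).
  - apply lsum_le. intros j Hj. destruct (Req_dec (a j) 0) as [E|E].
    + rewrite E. replace (0 ^ 2) with 0 by ring.
      apply Rmult_le_pos; [left; apply exp_pos|apply rpow_nonneg].
    + pose proof (Rabs_pos_lt _ E) as Ha.
      pose proof (Rabs_le_lp_norm (PFin r) l a j ltac:(simpl; lra) Hj) as Hag; fold g in Hag.
      rewrite <- pow2_abs, <- Rpower_2, rpow_Rpower by exact Ha.
      replace 2 with (r + (2 - r)) at 1 by ring.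
      rewrite Rpower_plus, (Rmult_comm (Rpower g _)).
      apply Rmult_le_compat_l; [left; apply exp_pos|].
      apply Rle_Rpower_l; lra.
  - rewrite lsum_scal, <- (lp_norm_Rpower r l a) by (fold g; lra).
    fold g. rewrite <- Rpower_plus.
    replace (2 - r + r) with 2 by ring. rewrite Rpower_2 by exact Hg. lra.
Qed.

Lemma rpow_rpow_Rabs_sq r x : 0 < r -> rpow (rpow (Rabs x) r) (2 / r) = x ^ 2.
Proof.
  intros Hr. destruct (Req_dec x 0) as [->|E].
  - rewrite Rabs_R0, (rpow_nonpos 0 r), rpow_nonpos by lra. ring.
  - pose proof (Rabs_pos_lt _ E) as Ha.
    rewrite (rpow_Rpower (Rabs x)), rpow_Rpower, Rpower_mult by (try apply exp_pos; exact Ha).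
    replace (r * (2 / r)) with 2 by (field; lra).
    rewrite Rpower_2 by exact Ha. apply pow2_abs.
Qed.

Lemma l2_le_lp_norm_ge2 r l a : 2 <= r -> l <> [] ->
  sqrt (lsum l (fun j => a j ^ 2))
  <= Rpower (INR (length l)) ((r - 2) / (2 * r)) * lp_norm (PFin r) l a.
Proof.
  intros Hr Hl. set (g := lp_norm (PFin r) l a). set (k := INR (length l)).
  assert (Hg2 : rpow (lsum l (fun j => rpow (Rabs (a j)) r)) (2 / r) = g ^ 2).
  { destruct (Req_dec g 0) as [Hg0|Hg0].
    - rewrite Hg0. unfold g in Hg0. simpl in Hg0.
      destruct (Rle_dec (lsum l (fun j => rpow (Rabs (a j)) r)) 0) as [HT|HT].
      + rewrite rpow_nonpos by exact HT. ring.
      + rewrite rpow_Rpower in Hg0 by lra. unfold Rpower in Hg0.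
        pose proof (exp_pos (1 / r * ln (lsum l (fun j => rpow (Rabs (a j)) r)))). lra.
    - assert (Hg : 0 < g) by (assert (0 <= g) by apply lp_norm_nonneg; lra).
      rewrite <- (lp_norm_Rpower r l a), rpow_Rpower, Rpower_mult
        by (try apply exp_pos; fold g; lra).
      replace (r * (2 / r)) with 2 by (field; lra). apply Rpower_2, Hg. }
  apply sqrt_le_of_sq; [apply Rmult_le_pos; [left; apply exp_pos|apply lp_norm_nonneg]|].
  rewrite <- (lsum_ext l (fun j => rpow (rpow (Rabs (a j)) r) (2 / r))) by
    (intros; apply rpow_rpow_Rabs_sq; lra).
  eapply Rle_trans.
  - apply lsum_rpow_le; [exact Hl| |intros; apply rpow_nonneg].
    split; [apply Rdiv_lt_0_compat; lra|].
    apply Rmult_le_reg_r with r; [lra|]. unfold Rdiv. rewrite Rmult_assoc, Rinv_l; lra.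
  - fold k.
    rewrite Hg2, Rpow_mult_distr, <- (Rpower_2 (Rpower k _)), Rpower_mult by apply exp_pos.
    replace ((r - 2) / (2 * r) * 2) with (1 - 2 / r) by (field; lra). lra.
Qed.

Lemma l2_le_linf l a : l <> [] ->
  sqrt (lsum l (fun j => a j ^ 2)) <= Rpower (INR (length l)) (1 / 2) * lp_norm PInf l a.
Proof.
  intros Hl. set (g := lp_norm PInf l a).
  pose proof (INR_length_pos l Hl) as Hk.
  replace (1 / 2) with (/ 2) by field. rewrite Rpower_sqrt by exact Hk.
  assert (0 <= g) by apply lp_norm_nonneg.
  apply sqrt_le_of_sq; [apply Rmult_le_pos; [apply sqrt_pos|lra]|].
  rewrite Rpow_mult_distr, pow2_sqrt, Rmult_comm, <- lsum_const by lra.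
  apply lsum_le. intros j Hj. rewrite <- pow2_abs. apply pow_incr.
  split; [apply Rabs_pos|apply (Rabs_le_lp_norm PInf); simpl; auto].
Qed.

Lemma l2_le_lp_norm p l a : valid_p p -> l <> [] ->
  sqrt (lsum l (fun j => a j ^ 2))
  <= Rmax 1 (Rpower (INR (length l)) (beta_exp p)) * lp_norm p l a.
Proof.
  intros Hp Hl. pose proof (lp_norm_nonneg p l a) as Hg.
  destruct p as [r|]; simpl in Hp.
  - destruct (Rle_dec r 2).
    + eapply Rle_trans; [apply (l2_le_lp_norm_le2 r); lra|].
      rewrite <- (Rmult_1_l (lp_norm _ l a)) at 1.
      apply Rmult_le_compat_r; [exact Hg|apply Rmax_l].
    + eapply Rle_trans; [apply (l2_le_lp_norm_ge2 r); [lra|exact Hl]|].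
      apply Rmult_le_compat_r; [exact Hg|apply Rmax_r].
  - eapply Rle_trans; [apply l2_le_linf, Hl|].
    apply Rmult_le_compat_r; [exact Hg|apply Rmax_r].
Qed.

Definition block (n : nat) (grp : nat -> nat) (i : nat) : list nat :=
  filter (in_group grp i) (seq 0 n).

Lemma gnorm_lp_norm p n grp (x : nat -> R) i : gnorm p n grp x i = lp_norm p (block n grp i) x.
Proof.
  destruct p; simpl.
  - change (rsum n ?F) with (lsum (seq 0 n) F). rewrite lsum_filter. reflexivity.
  - apply lmax_filter.
Qed.

Lemma gnorm_nonneg p n grp (x : nat -> R) i : 0 <= gnorm p n grp x i.
Proof. rewrite gnorm_lp_norm. apply lp_norm_nonneg. Qed.

Lemma inner_ew_nonneg p n m grp (x w : nat -> R) : box m w -> 0 <= inner_ew p n m grp x w.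
Proof.
  intros Hw. apply lsum_nonneg. intros i Hi. apply in_seq in Hi.
  apply Rmult_le_pos; [specialize (Hw i ltac:(lia)); lra|apply gnorm_nonneg].
Qed.

Section Blocks.
Variables (n m : nat) (grp : nat -> nat) (p : pexp).
Hypothesis Hpart : is_partition n m grp.
Hypothesis Hp : valid_p p.

Lemma block_nonempty i : (i < m)%nat -> block n grp i <> [].
Proof.
  intros Hi. destruct (proj2 Hpart i Hi) as (j & Hj & E).
  assert (Hin : In j (block n grp i)).
  { apply filter_In. split; [apply in_seq; lia|]. apply Nat.eqb_eq, E. }
  intros Hnil. rewrite Hnil in Hin. contradiction.
Qed.

Lemma one_le_beta : 1 <= beta p n m grp.
Proof. apply lmax_ge_init. Qed.

Lemma block_l2_le_beta_gnorm (x : nat -> R) i : (i < m)%nat ->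
  sqrt (lsum (block n grp i) (fun j => x j ^ 2)) <= beta p n m grp * gnorm p n grp x i.
Proof.
  intros Hi. rewrite gnorm_lp_norm.
  eapply Rle_trans; [apply l2_le_lp_norm; [exact Hp|apply block_nonempty, Hi]|].
  apply Rmult_le_compat_r; [apply lp_norm_nonneg|].
  apply Rmax_lub; [apply one_le_beta|].
  apply (lmax_ge 1 (seq 0 m) (fun i => Rpower (INR (card_group n grp i)) (beta_exp p))).
  apply in_seq. lia.
Qed.

Variable (d rho : R).

Lemma xrho_on_block (x : vec n) i j : In j (block n grp i) ->
  xrho p n grp d rho x j = if Rle_dec (rho * gnorm p n grp x i) d then 0 else x j.
Proof.
  intros Hj. apply filter_In in Hj. destruct Hj as [_ Hj].
  apply Nat.eqb_eq in Hj. simpl. unfold xrho_fun. rewrite Hj. reflexivity.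
Qed.

Lemma enorm_xrho_le (x : vec n) :
  enorm (xrho p n grp d rho x) x
  <= lsum (seq 0 m) (fun i =>
       if Rle_dec (rho * gnorm p n grp x i) d then beta p n m grp * gnorm p n grp x i else 0).
Proof.
  unfold enorm. change (rsum n ?F) with (lsum (seq 0 n) F).
  rewrite (lsum_partition grp m) by (intros j Hj; apply in_seq in Hj; apply (proj1 Hpart); lia).
  eapply Rle_trans; [apply sqrt_lsum_le; intros; apply lsum_nonneg; intros; apply pow2_ge_0|].
  apply lsum_le. intros i Hi. apply in_seq in Hi. fold (block n grp i).
  rewrite (lsum_ext _ _ (fun j => if Rle_dec (rho * gnorm p n grp x i) d then x j ^ 2 else 0))
    by (intros j Hj; rewrite (xrho_on_block x i j Hj); destruct (Rle_dec _ _); ring).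
  destruct (Rle_dec _ _).
  - apply block_l2_le_beta_gnorm. lia.
  - rewrite lsum_zero, sqrt_0 by auto. lra.
Qed.

Lemma G0_xrho_le (x : vec n) :
  G0 p n m grp (xrho p n grp d rho x)
  <= lsum (seq 0 m) (fun i => if Rle_dec (rho * gnorm p n grp x i) d then 0 else 1).
Proof.
  unfold G0. rewrite INR_length_filter. apply lsum_le. intros i _.
  destruct (Rle_dec _ _) as [Hle|Hgt].
  - rewrite gnorm_lp_norm, lp_norm_zero.
    + destruct (Req_EM_T 0 0); [lra|congruence].
    + intros j Hj. rewrite (xrho_on_block x i j Hj). destruct (Rle_dec _ _); tauto.
  - destruct (Req_EM_T _ _); lra.
Qed.

End Blocks.

Lemma block_cost_small P w G d ts t0 :
  0 <= P -> (w - t0) / (1 - ts) <= P -> 0 <= w <= 1 -> 0 <= G <= d ->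
  1 <= d * (1 - ts) -> ts < 1 -> t0 < 1 ->
  (1 - t0) * G / (d * (1 - ts)) <= P + (1 - w) * G.
Proof.
  intros HP Hsub Hw HG Hd Hts Ht0.
  set (tau := G / (d * (1 - ts))).
  assert (Hdts : 0 < d * (1 - ts)) by lra.
  assert (Htau0 : 0 <= tau) by (apply Rmult_le_pos; [lra|left; apply Rinv_0_lt_compat, Hdts]).
  assert (HtauG : tau <= G).
  { apply Rmult_le_reg_r with (d * (1 - ts)); [exact Hdts|].
    unfold tau, Rdiv. rewrite Rmult_assoc, Rinv_l; nra. }
  assert (Htau1 : tau * (1 - ts) <= 1).
  { unfold tau. replace (G / (d * (1 - ts)) * (1 - ts)) with (G / d) by (field; nra).
    apply Rmult_le_reg_r with d; [nra|]. unfold Rdiv. rewrite Rmult_assoc, Rinv_l; nra. }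
  replace ((1 - t0) * G / (d * (1 - ts))) with ((1 - t0) * tau)
    by (unfold tau; field; repeat split; nra).
  destruct (Rle_lt_dec t0 w).
  - (* the [w - t0] share is paid by the subgradient bound, the rest by the penalty *)
    assert ((w - t0) * tau <= P).
    { eapply Rle_trans; [|exact Hsub].
      apply Rmult_le_reg_r with (1 - ts); [lra|].
      replace ((w - t0) / (1 - ts) * (1 - ts)) with (w - t0) by (field; lra). nra. }
    nra.
  - nra.
Qed.

Lemma block_cost_large P w G d : 1 - d * (1 - w) <= P -> w <= 1 -> d < G ->
  1 <= P + (1 - w) * G.
Proof. intros. nra. Qed.

Section PhiFacts.
Variables (phi : R -> ER) (tstar : R).
Hypothesis Hphi : in_Phi phi tstar.

Lemma phi_finite t : 0 <= t <= 1 -> phi t = Some (rpart (phi t)).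
Proof.
  intros Ht. destruct Hphi as (_ & _ & Hint & _). destruct (Hint t Ht) as (dl & Hdl & H).
  specialize (H t). rewrite Rminus_diag, Rabs_R0 in H. specialize (H Hdl).
  destruct (phi t); simpl; congruence.
Qed.

Lemma phi_nonneg t : 0 <= t <= 1 -> 0 <= rpart (phi t).
Proof.
  intros Ht. pose proof (phi_finite t Ht) as E.
  destruct Hphi as (_ & _ & _ & _ & _ & _ & Hmin & _). specialize (Hmin t Ht).
  rewrite E in Hmin. exact Hmin.
Qed.

(* [(1 - phi t) / (1 - t)]: slope of the chord from [(t, phi t)] to [(1, phi 1)] = [(1, 1)]. *)
Lemma phi_chord_slope_mono t s : 0 <= t -> t < s -> s < 1 ->
  (1 - rpart (phi t)) / (1 - t) <= (1 - rpart (phi s)) / (1 - s).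
Proof.
  intros Ht Hts Hs.
  destruct Hphi as (_ & _ & _ & Hconv & _ & _ & _ & H1).
  set (l := (1 - s) / (1 - t)).
  assert (Hl : 0 <= l <= 1).
  { unfold l. split.
    - apply Rmult_le_pos; [lra|left; apply Rinv_0_lt_compat; lra].
    - apply Rmult_le_reg_r with (1 - t); [lra|]. unfold Rdiv. rewrite Rmult_assoc, Rinv_l; lra. }
  specialize (Hconv t 1 l ltac:(lra) ltac:(lra) Hl).
  replace (l * t + (1 - l) * 1) with s in Hconv by (unfold l; field; lra).
  rewrite H1 in Hconv. simpl in Hconv.
  apply Rmult_le_reg_r with (1 - s); [lra|].
  replace ((1 - rpart (phi s)) / (1 - s) * (1 - s)) with (1 - rpart (phi s)) by (field; lra).
  replace ((1 - rpart (phi t)) / (1 - t) * (1 - s)) with (l * (1 - rpart (phi t)))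
    by (unfold l; field; lra).
  lra.
Qed.

Variable d : R.
Hypothesis Hd : left_deriv_at1 phi d.

Lemma phi_chord_slope_le_deriv t : 0 <= t < 1 -> (1 - rpart (phi t)) / (1 - t) <= d.
Proof.
  intros Ht. set (q := (1 - rpart (phi t)) / (1 - t)).
  destruct (Rle_lt_dec q d) as [ok|Hq]; [exact ok|exfalso].
  destruct (Hd (q - d) ltac:(lra)) as (dl & Hdl & H).
  set (s := (Rmax t (1 - dl) + 1) / 2).
  pose proof (Rmax_l t (1 - dl)). pose proof (Rmax_r t (1 - dl)).
  pose proof (Rmax_lub_lt t (1 - dl) 1 ltac:(lra) ltac:(lra)).
  specialize (H s ltac:(unfold s; lra)).
  pose proof (phi_chord_slope_mono t s ltac:(lra) ltac:(unfold s; lra) ltac:(unfold s; lra))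
    as Hmono.
  destruct Hphi as (_ & _ & _ & _ & _ & _ & _ & Hphi1). rewrite Hphi1 in H. simpl in H.
  apply Rabs_def2 in H. fold q in Hmono. lra.
Qed.

Lemma phi_ge_tangent_at1 t : 0 <= t <= 1 -> 1 - d * (1 - t) <= rpart (phi t).
Proof.
  intros Ht. destruct (Req_dec t 1) as [->|Ht1].
  - destruct Hphi as (_ & _ & _ & _ & _ & _ & _ & ->). simpl. lra.
  - pose proof (phi_chord_slope_le_deriv t ltac:(lra)) as H.
    apply Rmult_le_compat_r with (r := 1 - t) in H; [|lra].
    replace ((1 - rpart (phi t)) / (1 - t) * (1 - t)) with (1 - rpart (phi t)) in H
      by (field; lra).
    lra.
Qed.

Lemma one_le_deriv_gap : 1 <= d * (1 - tstar).
Proof.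
  pose proof Hphi as (_ & _ & _ & _ & Hts & Hmin & _).
  pose proof (phi_ge_tangent_at1 tstar ltac:(lra)) as H. rewrite Hmin in H. simpl in H. lra.
Qed.

Variable t0 : R.
Hypothesis Ht0sub : in_subdiff (psi phi) t0 (1 / (1 - tstar)).

Lemma phi_ge_subgradient w : 0 <= w <= 1 -> (w - t0) / (1 - tstar) <= rpart (phi w).
Proof.
  intros Hw. destruct Ht0sub as [Hdom Hsub]. specialize (Hsub w).
  assert (Ht0 : 0 <= t0 <= 1).
  { unfold psi in Hdom. destruct (Rle_dec 0 t0), (Rle_dec t0 1); tauto || lra. }
  pose proof (phi_nonneg t0 Ht0).
  unfold psi in Hsub.
  destruct (Rle_dec 0 w), (Rle_dec w 1), (Rle_dec 0 t0), (Rle_dec t0 1); try lra.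
  rewrite (phi_finite w Hw) in Hsub. simpl in Hsub.
  pose proof Hphi as (_ & _ & _ & _ & Hts & _).
  replace ((w - t0) / (1 - tstar)) with (1 / (1 - tstar) * (w - t0)) by (field; lra). lra.
Qed.

End PhiFacts.

Lemma gopt_ext {A} (F : A -> Prop) (o1 o2 : A -> ER) :
  (forall z, F z -> o1 z = o2 z) -> forall z, gopt F o1 z <-> gopt F o2 z.
Proof.
  intros H z. unfold gopt. split; intros [Hz Hmin]; split; auto; intros z' Hz'.
  - rewrite <- !H by auto. auto.
  - rewrite !H by auto. auto.
Qed.

Lemma optval_ext {A} (F : A -> Prop) (o1 o2 : A -> ER) v :
  (forall z, F z -> o1 z = o2 z) -> optval F o1 v <-> optval F o2 v.
Proof.
  intros H. unfold optval. split; intros [Hlb Happ]; split.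
  - intros z Hz. rewrite <- H by auto. auto.
  - intros eps Heps. destruct (Happ eps Heps) as (z & r & Hz & E & Hr).
    exists z, r. rewrite <- H by auto. auto.
  - intros z Hz. rewrite H by auto. auto.
  - intros eps Heps. destruct (Happ eps Heps) as (z & r & Hz & E & Hr).
    exists z, r. rewrite H by auto. auto.
Qed.

Section ExactPenalty.
Variables (A : Type) (FP FQ : A -> Prop) (q pen : A -> R) (v rbar : R).
Hypothesis HFQ : forall z, FQ z <-> FP z /\ pen z = 0.
Hypothesis Hpen : forall z, FP z -> 0 <= pen z.
Hypothesis Hlow : forall z, FP z -> v <= q z + rbar * pen z.
Hypothesis Hatt : exists z, FQ z /\ q z = v.

Lemma penalty_optval : optval FQ (fun z => Some (q z)) v.
Proof.
  split.
  - intros z Hz. apply HFQ in Hz as [Hz Hz0]. simpl.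
    specialize (Hlow z Hz). rewrite Hz0 in Hlow. lra.
  - intros eps Heps. destruct Hatt as (z & Hz & Hqz).
    exists z, (q z). split; [exact Hz|split; [reflexivity|lra]].
Qed.

Lemma exact_penalty rho : rbar < rho -> forall z,
  gopt FP (fun z => Some (q z + rho * pen z)) z <-> gopt FQ (fun z => Some (q z)) z.
Proof.
  intros Hrho z. destruct Hatt as (zs & Hzs & Hqzs). apply HFQ in Hzs as [Hzs Hzs0].
  unfold gopt; simpl. split.
  - intros [Hz Hmin].
    assert (Hz0 : pen z = 0).
    { pose proof (Hmin zs Hzs) as Hle. simpl in Hle. rewrite Hzs0 in Hle.
      pose proof (Hlow z Hz). pose proof (Hpen z Hz). nra. }
    split; [apply HFQ; auto|].
    intros z' Hz'. apply HFQ in Hz' as [Hz' Hz'0].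
    pose proof (Hmin z' Hz') as Hle. simpl in Hle. rewrite Hz0, Hz'0 in Hle. lra.
  - intros [Hz Hmin]. apply HFQ in Hz as [Hz Hz0].
    specialize (Hmin zs (proj2 (HFQ zs) (conj Hzs Hzs0))). simpl in Hmin.
    split; [exact Hz|]. intros z' Hz'.
    pose proof (Hlow z' Hz'). pose proof (Hpen z' Hz'). rewrite Hz0. nra.
Qed.

End ExactPenalty.

Lemma esum_finite k (F : nat -> ER) (P : nat -> R) :
  (forall i, (i < k)%nat -> F i = Some (P i)) -> esum k F = Some (rsum k P).
Proof.
  intros H. unfold esum, rsum.
  assert (Hl : forall i, In i (seq 0 k) -> F i = Some (P i))
    by (intros i Hi; apply in_seq in Hi; apply H; lia).
  revert Hl. induction (seq 0 k) as [|a l IH]; simpl; intros Hl; [reflexivity|].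
  rewrite Hl, IH by auto. reflexivity.
Qed.

Lemma objQ_finite {n} m phi tstar nu (f : vec n -> ER) x w fx :
  in_Phi phi tstar -> f x = Some fx -> box m w ->
  objQ m phi nu f x w = Some (nu * fx + rsum m (fun i => rpart (phi (w i)))).
Proof.
  intros Hphi Hf Hw. unfold objQ. rewrite Hf, (esum_finite m _ (fun i => rpart (phi (w i)))).
  - reflexivity.
  - intros i Hi. apply (phi_finite phi tstar Hphi), Hw, Hi.
Qed.

Lemma G0_as_phi_sum phi tstar p n m grp (x : nat -> R) : in_Phi phi tstar ->
  exists w, box m w /\ inner_ew p n m grp x w = 0 /\
            rsum m (fun i => rpart (phi (w i))) = G0 p n m grp x.
Proof.
  intros Hphi. pose proof Hphi as (_ & _ & _ & _ & Hts & Hphits & _ & Hphi1).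
  exists (fun i => if Req_EM_T (gnorm p n grp x i) 0 then tstar else 1). split; [|split].
  - intros i _. destruct (Req_EM_T _ _); lra.
  - apply lsum_zero. intros i _. destruct (Req_EM_T _ _) as [->|]; ring.
  - unfold G0. rewrite INR_length_filter. apply lsum_ext. intros i _.
    destruct (Req_EM_T _ _); [rewrite Hphits|rewrite Hphi1]; reflexivity.
Qed.

Lemma lipschitz_rel_finite {n} (f : vec n -> ER) Om L x :
  lipschitz_rel f Om L -> Om x -> f x = Some (rpart (f x)).
Proof. intros Hlip Hx. destruct (Hlip x x Hx Hx) as (fx & _ & -> & _). reflexivity. Qed.

Section PenaltyLowerBound.
Variables (n m : nat) (grp : nat -> nat) (p : pexp) (phi : R -> ER)
  (tstar t0 d nu Lf varpi : R) (f : vec n -> ER) (Omega : vec n -> Prop).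
Hypotheses (Hpart : is_partition n m grp) (Hp : valid_p p)
  (Hphi : in_Phi phi tstar) (Hd : left_deriv_at1 phi d)
  (Ht0 : 0 <= t0 < 1) (Ht0sub : in_subdiff (psi phi) t0 (1 / (1 - tstar)))
  (Hnu : 0 < nu) (HLf : 0 < Lf) (Hlip : lipschitz_rel f Omega Lf)
  (Hxrho : forall x rho, Omega x -> 0 < rho -> Omega (xrho p n grp d rho x))
  (Hlb : forall x, Omega x -> ege (obj0 p m grp nu f x) varpi).
Variable rbar : R.
Hypothesis Hrbar : rbar = d * (1 - tstar) * beta p n m grp * nu * Lf / (1 - t0).

Let Hts : 0 <= tstar < 1.
Proof. apply Hphi. Qed.

Lemma rbar_pos : 0 < rbar.
Proof.
  pose proof (one_le_deriv_gap phi tstar Hphi d Hd). pose proof (one_le_beta n m grp p).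
  rewrite Hrbar. apply Rdiv_lt_0_compat; [|lra].
  pose proof Hts. repeat apply Rmult_lt_0_compat; nra.
Qed.

(* The left-hand side is what block [i] costs when [x] is compared with [x^rbar]: a zeroed
   block costs [nu Lf beta ||x_{J_i}||] through the Lipschitz bound, a kept one [1] in
   [||G(x^rbar)||_0]. *)
Lemma block_cost w g : 0 <= w <= 1 -> 0 <= g ->
  (if Rle_dec (rbar * g) d then nu * Lf * (beta p n m grp * g) else 1)
  <= rpart (phi w) + rbar * ((1 - w) * g).
Proof.
  intros Hw Hg. pose proof (one_le_deriv_gap phi tstar Hphi d Hd) as Hgap.
  pose proof rbar_pos. destruct (Rle_dec _ _) as [Hle|Hgt].
  - replace (nu * Lf * (beta p n m grp * g)) with ((1 - t0) * (rbar * g) / (d * (1 - tstar)))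
      by (rewrite Hrbar; field; repeat split; nra).
    replace (rbar * ((1 - w) * g)) with ((1 - w) * (rbar * g)) by ring.
    apply block_cost_small; try lra.
    + apply (phi_nonneg phi tstar Hphi), Hw.
    + apply (phi_ge_subgradient phi tstar Hphi t0 Ht0sub), Hw.
    + split; [apply Rmult_le_pos|]; lra.
  - replace (rbar * ((1 - w) * g)) with ((1 - w) * (rbar * g)) by ring.
    apply (block_cost_large _ _ _ d); [apply (phi_ge_tangent_at1 phi tstar Hphi d Hd), Hw|lra|lra].
Qed.

Lemma penalized_objective_ge x w : Omega x -> box m w ->
  varpi <= nu * rpart (f x) + rsum m (fun i => rpart (phi (w i))) + rbar * inner_ew p n m grp x w.
Proof.
  intros Hx Hw. set (x' := xrho p n grp d rbar x).
  assert (Hx' : Omega x') by (apply Hxrho; [exact Hx|apply rbar_pos]).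
  destruct (Hlip x' x Hx' Hx) as (fx' & fx & Hfx' & Hfx & Hl).
  pose proof (Hlb x' Hx') as Ho. unfold obj0 in Ho. rewrite Hfx' in Ho.
  cbn [eadd escal option_map ege] in Ho.
  pose proof (enorm_xrho_le n m grp p Hpart Hp d rbar x) as He. fold x' in He.
  pose proof (G0_xrho_le n m grp p d rbar x) as HG. fold x' in HG.
  set (g := gnorm p n grp x) in *.
  assert (Hcost :
    nu * Lf * lsum (seq 0 m) (fun i => if Rle_dec (rbar * g i) d then beta p n m grp * g i else 0)
    + lsum (seq 0 m) (fun i => if Rle_dec (rbar * g i) d then 0 else 1)
    <= rsum m (fun i => rpart (phi (w i))) + rbar * inner_ew p n m grp x w).
  { unfold inner_ew. change (rsum m ?F) with (lsum (seq 0 m) F).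
    rewrite <- !lsum_scal, <- !lsum_plus. apply lsum_le. intros i Hi. apply in_seq in Hi.
    eapply Rle_trans; [|apply block_cost; [apply Hw; lia|apply gnorm_nonneg]].
    fold g. destruct (Rle_dec _ _); lra. }
  rewrite Hfx. simpl.
  assert (nu * fx' <= nu * fx + nu * Lf * enorm x' x).
  { pose proof (Rle_abs (fx' - fx)). apply Rmult_le_compat_l with (r := nu) in Hl; nra. }
  assert (nu * Lf * enorm x' x <= nu * Lf * lsum (seq 0 m)
            (fun i => if Rle_dec (rbar * g i) d then beta p n m grp * g i else 0))
    by (apply Rmult_le_compat_l; nra).
  lra.
Qed.

End PenaltyLowerBound.

Theorem theorem3p2
  (n m : nat) (grp : nat -> nat) (p : pexp) (phi : R -> ER)
  (tstar t0 d nu Lf varpi : R) (f : vec n -> ER) (Omega : vec n -> Prop)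
  (Hpart : is_partition n m grp) (Hp : valid_p p)
  (Hphi : in_Phi phi tstar) (Hd : left_deriv_at1 phi d)
  (Ht0 : 0 <= t0 < 1) (Ht0sub : in_subdiff (psi phi) t0 (1 / (1 - tstar)))
  (Hnu : 0 < nu) (Hfp : proper_f f) (Hflsc : lsc_f f) (HOm : closed_vset Omega)
  (Hopt : optval_attained Omega (obj0 p m grp nu f) varpi)
  (HLf : 0 < Lf) (Hlip : lipschitz_rel f Omega Lf)
  (Hxrho : forall x rho, Omega x -> 0 < rho -> Omega (xrho p n grp d rho x)) :
  let rbar := d * (1 - tstar) * beta p n m grp * nu * Lf / (1 - t0) in
  let FQ := fun z : vec n * (nat -> R) =>
      Omega (fst z) /\ box m (snd z) /\ inner_ew p n m grp (fst z) (snd z) = 0 in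
  let FP := fun z : vec n * (nat -> R) => Omega (fst z) /\ box m (snd z) in
  ((forall x w, Omega x -> box m w -> ege (objPen p m grp phi nu f rbar x w) varpi) /\
   optval FQ (fun z => objQ m phi nu f (fst z) (snd z)) varpi) /\
  (forall rho, rbar < rho -> forall z,
     gopt FP (fun z => objPen p m grp phi nu f rho (fst z) (snd z)) z <->
     gopt FQ (fun z => objQ m phi nu f (fst z) (snd z)) z).
Proof.
  intros rbar FQ FP. destruct Hopt as [(xs & Hxs & Hobj) Hlb].
  set (q := fun z : vec n * (nat -> R) =>
    nu * rpart (f (fst z)) + rsum m (fun i => rpart (phi (snd z i)))).
  set (pen := fun z : vec n * (nat -> R) => inner_ew p n m grp (fst z) (snd z)).
  assert (HQ : forall z, FP z -> objQ m phi nu f (fst z) (snd z) = Some (q z)).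
  { intros z [Hx Hw]. apply (objQ_finite m phi tstar); [exact Hphi| |exact Hw].
    apply (lipschitz_rel_finite f Omega Lf _ Hlip Hx). }
  assert (HP : forall rho z, FP z ->
    objPen p m grp phi nu f rho (fst z) (snd z) = Some (q z + rho * pen z)).
  { intros rho z Hz. unfold objPen. rewrite HQ by exact Hz. reflexivity. }
  assert (HFQ : forall z, FQ z <-> FP z /\ pen z = 0) by (unfold FQ, FP, pen; tauto).
  assert (Hpen : forall z, FP z -> 0 <= pen z)
    by (intros z [_ Hw]; apply inner_ew_nonneg, Hw).
  assert (Hlow : forall z, FP z -> varpi <= q z + rbar * pen z).
  { intros z [Hx Hw].
    apply (penalized_objective_ge n m grp p phi tstar t0 d nu Lf varpi f Omega); auto. }
  assert (Hatt : exists z, FQ z /\ q z = varpi).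
  { destruct (G0_as_phi_sum phi tstar p n m grp xs Hphi) as (ws & Hws & Hi & Hsum).
    exists (xs, ws). split; [unfold FQ; simpl; auto|].
    unfold obj0 in Hobj. rewrite (lipschitz_rel_finite f Omega Lf xs Hlip Hxs) in Hobj.
    injection Hobj as <-. unfold q. simpl. rewrite Hsum. reflexivity. }
  split; [split|].
  - intros x w Hx Hw.
    rewrite (HP rbar (x, w) (conj Hx Hw) : objPen _ _ _ _ _ _ _ x w = _).
    apply Hlow. split; auto.
  - rewrite (optval_ext FQ _ (fun z => Some (q z))) by (intros z Hz; apply HQ, HFQ, Hz).
    apply (penalty_optval _ FP FQ q pen varpi rbar); auto.
  - intros rho Hrho z.
    rewrite (gopt_ext FP _ (fun z => Some (q z + rho * pen z))) by (intros; apply HP; auto).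
    rewrite (gopt_ext FQ _ (fun z => Some (q z))) by (intros z' Hz'; apply HQ, HFQ, Hz').
    apply (exact_penalty _ FP FQ q pen varpi rbar); auto.
Qed.
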